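(* Let $\Phi$ be a potential-inner automorphism of $\mathcal C$, witnessed by bijections $s_A:A\to\Phi(A)$ with $\Phi(\mu)=s_B\circ\mu\circ s_A^{-1}$ for all morphisms $\mu:A\to B$ of $\mathcal C$. For each object $A$, let $A^*$ denote the algebra on the underlying set of $\Phi(A)$ obtained by transporting the structure of $A$ along $s_A$, so that $s_A:A\to A^*$ is an isomorphism. Then $\Phi$ is inner if and only if there exists a central function $A\mapsto c_A$ on $\mathcal C$ such that, for every object $A$, the map $c_{\Phi(A)}$ is an isomorphism of the algebra $\Phi(A)$ onto the algebra $A^*$.
   Context: Let $\mathcal V$ be a variety of universal algebras, and let $\mathcal C$ be a full subcategory of the category $\Theta(\mathcal V)$ of all $\mathcal V$-algebras and homomorphisms, containing a free $\mathcal V$-algebra on one generator. An automorphism $\Phi$ of $\mathcal C$ is potential-inner if there are bijections of underlying sets $s_A:A\to\Phi(A)$ with $\Phi(\mu)=s_B\circ\mu\circ s_A^{-1}$ for every morphism $\mu:A\to B$. It is inner if such $s_A$ can be chosen to be algebra isomorphisms. A central function on $\mathcal C$ assigns to every object $A$ a permutation $c_A$ of its underlying set such that $c_B\circ\nu\circ c_A^{-1}=\nu$ for every morphism $\nu:A\to B$ of $\mathcal C$. *)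

From mathcomp Require Import all_boot.
Unset Implicit Arguments.
Unset Strict Implicit.
Unset Printing Implicit Defensive.

Record signature := Signature { sym : Type; arity : sym -> nat }.
Arguments arity s _ : clear implicits.

Section UA.
Variable S : signature.

Record algebra := Algebra {
  carrier :> Type;
  interp : forall o : sym S, ('I_(arity S o) -> carrier) -> carrier }.

Definition is_hom (A B : algebra) (f : A -> B) : Prop :=
  forall (o : sym S) (args : 'I_(arity S o) -> A),
    f (interp A o args) = interp B o (fun i => f (args i)).

Definition is_iso (A B : algebra) (f : A -> B) : Prop :=
  bijective f /\ is_hom A B f.

Inductive term : Type :=
  | Var of nat
  | App (o : sym S) of ('I_(arity S o) -> term).

Fixpoint eval (A : algebra) (v : nat -> A) (t : term) : A :=
  match t with
  | Var n => v n
  | App o args => interp A o (fun i => eval A v (args i))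
  end.

(* A variety is given by a set of identities (pairs of terms). *)
Definition variety := (term * term)%type -> Prop.

Definition in_variety (V : variety) (A : algebra) : Prop :=
  forall e, V e -> forall v : nat -> A, eval A v e.1 = eval A v e.2.

Definition free_on_one (V : variety) (F : algebra) (x : F) : Prop :=
  in_variety V F /\
  forall B : algebra, in_variety V B -> forall b : B,
    (exists h : F -> B, is_hom F B h /\ h x = b) /\
    (forall h1 h2 : F -> B, is_hom F B h1 -> is_hom F B h2 ->
        h1 x = b -> h2 x = b -> h1 =1 h2).

Definition transport (A : algebra) (B : Type) (s : A -> B) (sinv : B -> A)
  : algebra :=
  @Algebra B (fun o args => s (interp A o (fun i => sinv (args i)))).

(* A full subcategory is given by its class of objects (a predicate on
   algebras); its morphisms are all homomorphisms. *)
Section FullSub.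
Variable C : algebra -> Prop.

Definition Obj := {A : algebra | C A}.
Definition oalg (X : Obj) : algebra := proj1_sig X.

Definition hom (X Y : Obj) := {f : oalg X -> oalg Y | is_hom (oalg X) (oalg Y) f}.

Lemma id_is_hom (X : Obj) : is_hom (oalg X) (oalg X) (fun x => x).
Proof. by []. Qed.

Definition id_hom (X : Obj) : hom X X := exist _ (fun x => x) (id_is_hom X).

Lemma comp_is_hom {X Y Z : Obj} (g : hom Y Z) (f : hom X Y) :
  is_hom (oalg X) (oalg Z) (fun x => proj1_sig g (proj1_sig f x)).
Proof.
move=> o args /=; rewrite (proj2_sig f) (proj2_sig g) //.
Qed.

Definition comp_hom {X Y Z : Obj} (g : hom Y Z) (f : hom X Y) : hom X Z :=
  exist _ _ (comp_is_hom g f).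

Record functor := Functor {
  Fo : Obj -> Obj;
  Fm : forall {X Y : Obj}, hom X Y -> hom (Fo X) (Fo Y);
  Fm_id : forall X, proj1_sig (Fm (id_hom X)) =1 proj1_sig (id_hom (Fo X));
  Fm_comp : forall X Y Z (g : hom Y Z) (f : hom X Y),
      proj1_sig (Fm (comp_hom g f)) =1 proj1_sig (comp_hom (Fm g) (Fm f)) }.

(* An automorphism (isomorphism of categories C -> C): a functor that is
   bijective on objects and on every hom-set. *)
Definition automorphism (Phi : functor) : Prop :=
  bijective (Fo Phi) /\ forall X Y : Obj, bijective (@Fm Phi X Y).

(* Witness of potential-innerness: bijections s_X : X -> Phi(X) (with inverse
   sinv_X) such that Phi(mu) = s_Y o mu o s_X^{-1}. *)
Record pi_witness (Phi : functor) := PiWitness {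
  s : forall X : Obj, oalg X -> oalg (Fo Phi X);
  sinv : forall X : Obj, oalg (Fo Phi X) -> oalg X;
  sK : forall X, cancel (s X) (sinv X);
  sinvK : forall X, cancel (sinv X) (s X);
  s_nat : forall (X Y : Obj) (mu : hom X Y),
      proj1_sig (Fm Phi mu) =1 (fun y => s Y (proj1_sig mu (sinv X y))) }.

Arguments s {Phi} p X x.
Arguments sinv {Phi} p X y.

Definition potential_inner (Phi : functor) : Prop := inhabited (pi_witness Phi).

Definition inner (Phi : functor) : Prop :=
  exists w : pi_witness Phi,
    forall X : Obj, is_iso (oalg X) (oalg (Fo Phi X)) (s w X).

Definition Astar (Phi : functor) (w : pi_witness Phi) (X : Obj) : algebra :=
  @transport (oalg X) (oalg (Fo Phi X)) (s w X) (sinv w X).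

Record central_function := CentralFunction {
  c : forall X : Obj, oalg X -> oalg X;
  cinv : forall X : Obj, oalg X -> oalg X;
  cK : forall X, cancel (c X) (cinv X);
  cinvK : forall X, cancel (cinv X) (c X);
  c_central : forall (X Y : Obj) (nu : hom X Y),
      (fun x => c Y (proj1_sig nu (cinv X x))) =1 proj1_sig nu }.

End FullSub.
End UA.
Arguments Fo {S C} _ _.
Arguments Fm {S C} _ {X Y} _.
Arguments s {S C Phi} _ _ _.
Arguments sinv {S C Phi} _ _ _.
Arguments c {S C} _ _ _.
Arguments cinv {S C} _ _ _.
Arguments oalg {S C} X.
Arguments in_variety {S} V A.
Arguments free_on_one {S} V F x.
Arguments is_iso {S} A B f.
Arguments is_hom {S} A B f.
Arguments inner {S C} Phi.
Arguments potential_inner {S C} Phi.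
Arguments automorphism {S C} Phi.
Arguments Astar {S C Phi} w X.
Arguments interp {S} a o _.

From mathcomp Require Import all_boot.
From Stdlib Require Import ProofIrrelevance FunctionalExtensionality.

Set Implicit Arguments.

(* Two witnesses [w], [w'] of potential innerness differ by the maps
   [s_w X \o (s_w' X)^-1] on the objects [Phi X]; naturality of both witnesses
   and surjectivity of [Phi] on morphisms make this family central, and
   bijectivity of [Phi] on objects extends it to all objects.  If [s_w'] is an
   isomorphism, this central family maps [Phi X] isomorphically onto [X^*].
   Conversely, composing [s_w] with the inverses of a central function gives
   a new witness, natural by centrality, whose components are isomorphisms
   when the central function maps [Phi X] isomorphically onto [X^*]. *)

Section Isomorphisms.
Variable S : signature.
Implicit Types A B D : algebra S.

Lemma is_hom_comp A B D (f : A -> B) (g : B -> D) :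
  is_hom A B f -> is_hom B D g -> is_hom A D (g \o f).
Proof. by move=> f_hom g_hom o args /=; rewrite f_hom g_hom. Qed.

Lemma is_hom_can A B (f : A -> B) (f' : B -> A) :
  cancel f f' -> cancel f' f -> is_hom A B f -> is_hom B A f'.
Proof.
move=> fK f'K f_hom o args; apply: (can_inj fK); rewrite f'K f_hom.
by congr (interp B o _); apply: functional_extensionality => i; rewrite f'K.
Qed.

Lemma is_iso_comp A B D (f : A -> B) (g : B -> D) :
  is_iso A B f -> is_iso B D g -> is_iso A D (g \o f).
Proof.
case=> f_bij f_hom [g_bij g_hom].
by split; [apply: bij_comp | apply: is_hom_comp].
Qed.

Lemma is_iso_can A B (f : A -> B) (f' : B -> A) :
  is_iso A B f -> cancel f f' -> cancel f' f -> is_iso B A f'.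
Proof.
by move=> [_ f_hom] fK f'K; split; [exists f | apply: is_hom_can f_hom].
Qed.

Lemma transport_iso A (B : Type) (t : A -> B) (t' : B -> A) :
  cancel t t' -> cancel t' t -> is_iso A (transport S A B t t') t.
Proof.
move=> tK t'K; split; first by exists t'.
move=> o args /=; congr (t (interp A o _)).
by apply: functional_extensionality => i; rewrite tK.
Qed.

End Isomorphisms.

Section CentralFunctions.
Variables (S : signature) (C : algebra S -> Prop).

Lemma c_hom (cf : central_function S C) (X Y : Obj S C) (nu : hom S C X Y) x :
  c cf Y (proj1_sig nu x) = proj1_sig nu (c cf X x).
Proof. by rewrite -(c_central _ _ cf X Y nu (c cf X x)) /= cK. Qed.

(* [ecast] transports a family given on the objects [f X] to all objects
   [Y = f (g Y)]; by proof irrelevance, on [f X] it gives back the family. *)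
Lemma central_function_on_image (f g : Obj S C -> Obj S C)
    (d dinv : forall X, oalg (f X) -> oalg (f X)) :
  cancel f g -> cancel g f ->
  (forall X, cancel (d X) (dinv X)) -> (forall X, cancel (dinv X) (d X)) ->
  (forall X1 X2 (nu : hom S C (f X1) (f X2)),
      (fun y => d X2 (proj1_sig nu (dinv X1 y))) =1 proj1_sig nu) ->
  exists cf : central_function S C, forall X, c cf (f X) = d X.
Proof.
move=> fK gK dK dinvK d_central.
pose cast (h : forall X, oalg (f X) -> oalg (f X)) X Y (e : f X = Y) :=
  ecast Z (oalg Z -> oalg Z) e (h X).
have castK X Y (e : f X = Y) : cancel (cast d X Y e) (cast dinv X Y e).
  by case: Y / e; apply: dK.
have castVK X Y (e : f X = Y) : cancel (cast dinv X Y e) (cast d X Y e).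
  by case: Y / e; apply: dinvK.
have cast_central X1 X2 Y1 Y2 (e1 : f X1 = Y1) (e2 : f X2 = Y2)
    (nu : hom S C Y1 Y2) :
    (fun y => cast d X2 Y2 e2 (proj1_sig nu (cast dinv X1 Y1 e1 y)))
      =1 proj1_sig nu.
  by case: Y1 / e1 nu; case: Y2 / e2 => nu; apply: d_central.
exists (CentralFunction S C
  (fun Y => cast d _ Y (gK Y)) (fun Y => cast dinv _ Y (gK Y))
  (fun Y => castK _ _ (gK Y)) (fun Y => castVK _ _ (gK Y))
  (fun Y1 Y2 => cast_central _ _ _ _ (gK Y1) (gK Y2))) => X /=.
move: (gK (f X)); case: (g (f X)) / (esym (fK X)) => e.
by rewrite (proof_irrelevance _ e erefl).
Qed.

End CentralFunctions.

Section Witnesses.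
Variables (S : signature) (C : algebra S -> Prop) (Phi : functor S C).
Implicit Types (w : pi_witness S C Phi) (X : Obj S C).

Lemma Astar_iso w X : is_iso (oalg X) (Astar w X) (s w X).
Proof. exact: transport_iso (sK _ _ _ w X) (sinvK _ _ _ w X). Qed.

Definition transition w w' X : oalg (Fo Phi X) -> oalg (Fo Phi X) :=
  s w X \o sinv w' X.

Lemma transitionK w w' X : cancel (transition w w' X) (transition w' w X).
Proof. by move=> y; rewrite /transition /= sK sinvK. Qed.

Lemma transition_central w w' :
  (forall X Y, bijective (@Fm _ _ Phi X Y)) ->
  forall X1 X2 (nu : hom S C (Fo Phi X1) (Fo Phi X2)),
    (fun y => transition w w' X2 (proj1_sig nu (transition w' w X1 y)))
      =1 proj1_sig nu.
Proof.
move=> Fm_bij X1 X2 nu y; have [mu _ muK] := Fm_bij X1 X2.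
by rewrite -(muK nu) /transition /= (s_nat _ _ _ w') !sK (s_nat _ _ _ w).
Qed.

Definition central_twist_s w (cf : central_function S C) X :
  oalg X -> oalg (Fo Phi X) := cinv cf (Fo Phi X) \o s w X.

Definition central_twist_sinv w (cf : central_function S C) X :
  oalg (Fo Phi X) -> oalg X := sinv w X \o c cf (Fo Phi X).

Lemma central_twist_sK w cf X :
  cancel (central_twist_s w cf X) (central_twist_sinv w cf X).
Proof. by move=> x; rewrite /central_twist_s /central_twist_sinv /= cinvK sK.
Qed.

Lemma central_twist_sinvK w cf X :
  cancel (central_twist_sinv w cf X) (central_twist_s w cf X).
Proof. by move=> y; rewrite /central_twist_s /central_twist_sinv /= sinvK cK.
Qed.

Lemma central_twist_nat w cf X Y (mu : hom S C X Y) :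
  proj1_sig (Fm Phi mu)
    =1 (fun y => central_twist_s w cf Y
                   (proj1_sig mu (central_twist_sinv w cf X y))).
Proof.
move=> y; rewrite /central_twist_s /central_twist_sinv /=.
by rewrite -(s_nat _ _ _ w) -c_hom cK.
Qed.

Definition central_twist w cf : pi_witness S C Phi :=
  PiWitness S C Phi (central_twist_s w cf) (central_twist_sinv w cf)
    (central_twist_sK w cf) (central_twist_sinvK w cf)
    (central_twist_nat w cf).

End Witnesses.

Theorem mainTheorem3 (S : signature) (V : variety S) (C : algebra S -> Prop)
  (HC : forall A, C A -> in_variety V A)
  (Hfree : exists (F : algebra S) (x : F), C F /\ free_on_one V F x)
  (Phi : functor S C) (Haut : automorphism Phi) (w : pi_witness S C Phi) :
  inner Phi <->
  exists cf : central_function S C,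
    forall X : Obj S C,
      is_iso (oalg (Fo Phi X)) (Astar w X) (c cf (Fo Phi X)).
Proof.
case: Haut => [[g PhiK gK] Fm_bij]; split.
- case=> w' w'_iso.
  have [cf cfE] :=
    central_function_on_image (transition w w') (transition w' w) PhiK gK
      (transitionK w w') (transitionK w' w) (transition_central w w' Fm_bij).
  exists cf => X; rewrite cfE /transition.
  exact: is_iso_comp (is_iso_can (w'_iso X) (sK _ _ _ w' X) (sinvK _ _ _ w' X))
                     (Astar_iso w X).
- case=> cf cf_iso; exists (central_twist w cf) => X /=.
  rewrite /central_twist_s.
  exact: is_iso_comp (Astar_iso w X)
                     (is_iso_can (cf_iso X) (cK _ _ cf _) (cinvK _ _ cf _)).
Qed.
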